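(* Let $\sigma$ be an erasing $k$-block substitution with $w_\epsilon\ne1^k$. Then for every $x\in f_\sigma(\mathbb I)\setminus\mathcal Q_2^0$, the fiber $f_\sigma^{-1}(x)$ is uncountable.
   Context: Notation: $\mathbb I=[0,1]$. $\mathcal Q_2^0$ is the set of dyadic rationals in $[0,1)$, i.e. the dyadic rationals of $\mathbb I$ other than $1$. $\{0,1\}^*$ and $\{0,1\}^\omega$ denote finite and infinite binary words, and $\epsilon$ is the empty word. For a word $w$, set $0.w=\sum_iw_i2^{-i}$. For $x\in(0,1]$, $\widetilde x$ is the unique infinite binary expansion of $x$ not ending in $0^\infty$. Fix $k\ge2$. An erasing $k$-block substitution is a map $\sigma:\{0,1\}^k\to\{0,1\}^*$ with exactly one block $w_\epsilon$ such that $\sigma(w_\epsilon)=\epsilon$. It acts blockwise on infinite words, concatenating the images of consecutive $k$-blocks. The map $f_\sigma:\mathbb I\to\mathbb I$ is defined by $f_\sigma(x)=0.\sigma(\widetilde x)$ if $x\in(0,1]$ and $\widetilde x\neq w_\epsilon^\infty$, and $f_\sigma(x)=0$ otherwise. *)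

From Stdlib Require Import Reals ClassicalEpsilon.
From Coquelicot Require Import Coquelicot.
From mathcomp Require Import ssreflect ssrfun ssrbool eqtype ssrnat seq fintype tuple.

Set Implicit Arguments.
Unset Strict Implicit.
Unset Printing Implicit Defensive.

(* Infinite binary words are functions nat -> bool (letter i at index i,
   i.e. w_{i+1} in the paper's 1-based indexing). Finite words: seq bool. *)
Definition iword := nat -> bool.

(* 0.w for a finite word w = sum_i w_i 2^{-i} (1-based). *)
Fixpoint fval (w : seq bool) : R :=
  match w with
  | [::] => 0%R
  | b :: w' => (((if b then 1 else 0) + fval w') / 2)%R
  end.

Definition iprefix (w : iword) (n : nat) : seq bool := mkseq w n.

Definition is_expansion (x : R) (w : iword) : Prop :=
  is_lim_seq (fun n => fval (iprefix w n)) x.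

Definition not_ending_in_zeros (w : iword) : Prop :=
  forall n, exists m, (n <= m)%N /\ w m = true.

(* x~ : the (unique, for x in (0,1]) infinite binary expansion of x not
   ending in 0^infinity; chosen by epsilon. *)
Definition tilde (x : R) : iword :=
  epsilon (inhabits (fun _ : nat => false))
    (fun w => is_expansion x w /\ not_ending_in_zeros w).

Definition block (k : nat) (w : iword) (n : nat) : k.-tuple bool :=
  [tuple w (k * n + val i)%N | i < k].

Definition subst_prefix (k : nat) (sigma : k.-tuple bool -> seq bool)
  (w : iword) (n : nat) : seq bool :=
  flatten [seq sigma (block k w i) | i <- iota 0 n].

(* 0.sigma(w) : value of the (finite or infinite) concatenated word,
   i.e. the limit of the values of its prefixes sigma(b_0)...sigma(b_{n-1})
   (a nondecreasing sequence bounded by 1). *)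
Definition subst_val (k : nat) (sigma : k.-tuple bool -> seq bool) (w : iword) : R :=
  real (Lim_seq (fun n => fval (subst_prefix sigma w n))).

Definition is_block_power (k : nat) (b : k.-tuple bool) (w : iword) : Prop :=
  forall n, block k w n = b.

Definition erasing_subst (k : nat) (sigma : k.-tuple bool -> seq bool)
  (weps : k.-tuple bool) : Prop :=
  sigma weps = [::] /\ forall b, sigma b = [::] -> b = weps.

(* f_sigma : I -> I (represented on R; only its values on [0,1] matter) *)
Definition f_sigma (k : nat) (sigma : k.-tuple bool -> seq bool)
  (weps : k.-tuple bool) (x : R) : R :=
  if excluded_middle_informative
       ((0 < x <= 1)%R /\ ~ is_block_power weps (tilde x))
  then subst_val sigma (tilde x) else 0%R.

Definition dyadic0 (x : R) : Prop :=
  (0 <= x < 1)%R /\ exists (m n : nat), x = (INR m / 2 ^ n)%R.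

Definition uncountable (P : R -> Prop) : Prop :=
  ~ exists g : R -> nat, forall y z, P y -> P z -> g y = g z -> y = z.

From Stdlib Require Import Reals Lra Lia ClassicalEpsilon FunctionalExtensionality.
From Coquelicot Require Import Coquelicot.
From mathcomp Require Import ssreflect ssrfun ssrbool eqtype ssrnat seq fintype tuple div.
From mathcomp Require Import zify.

(* Pick y0 with f_sigma(y0) = x and let w = tilde y0.  Since x is
   not a dyadic rational of [0,1), infinitely many k-blocks b_0, b_1, ... of w
   differ from the erased block w_eps (otherwise 0.sigma(w) would be a finite
   binary fraction); enumerate such indices injectively by e.  For every
   selector t : nat -> bool build the word interleave(t) whose block pair
   (2j, 2j+1) is (b_j, w_eps) if t j is false and (w_eps, b_j) otherwise.
   Erasing w_eps gives sigma(interleave t) = sigma(w); interleave(t) does not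
   end in 0^oo, so it is the canonical expansion of its value, which thus lies
   in the fiber of x; and t is recovered from interleave(t) at every index
   e n.  Choosing t = 1 on {e n | S n} for S : nat -> bool injects the
   uncountable Cantor space into the fiber.  The argument does not need the
   hypothesis w_eps <> 1^k. *)

Definition bitval (b : bool) : R := if b then 1%R else 0%R.

Lemma bitval_bounds b : (0 <= bitval b <= 1)%R.
Proof. case: b => /=; lra. Qed.

Lemma pow2_pos n : (0 < 2 ^ n)%R.
Proof. apply: pow_lt; lra. Qed.

Lemma inv_pow2_pos n : (0 < / 2 ^ n)%R.
Proof. exact/Rinv_0_lt_compat/pow2_pos. Qed.

Lemma INR_expn2 n : INR (2 ^ n)%N = (2 ^ n)%R.
Proof. elim: n => [|n IH] //=; rewrite expnS mult_INR IH /=; lra. Qed.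

Lemma fval_cat a b : fval (a ++ b) = (fval a + fval b / 2 ^ size a)%R.
Proof.
elim: a => [|c a IH] /=; first by field.
rewrite IH; have := pow2_pos (size a); move=> ?; field; lra.
Qed.

Lemma fval_bounds a : (0 <= fval a < 1)%R.
Proof. elim: a => [|[] a IH] /=; lra. Qed.

Lemma fval_dyadic a : exists m : nat, fval a = (INR m / 2 ^ size a)%R.
Proof.
elim: a => [|c a [m Hm]] /=; first by exists 0%N; rewrite /=; field.
exists ((if c then 2 ^ size a else 0) + m)%N; rewrite Hm plus_INR.
have := pow2_pos (size a); case: c => [|] ? /=; rewrite ?INR_expn2 /=; field; lra.
Qed.

Lemma dyadic0_fval a : dyadic0 (fval a).
Proof.
split; first by have := fval_bounds a; lra.
by have [m Hm] := fval_dyadic a; exists m, (size a).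
Qed.

Lemma dyadic0_0 : dyadic0 0%R.
Proof. by have := dyadic0_fval [::]. Qed.

Definition pval (w : iword) (n : nat) : R := fval (iprefix w n).

Lemma pval0 w : pval w 0 = 0%R.
Proof. by []. Qed.

Lemma pvalS w n : pval w n.+1 = (pval w n + bitval (w n) / 2 ^ n.+1)%R.
Proof.
rewrite /pval /iprefix mkseqS -cats1 fval_cat size_mkseq /=.
have := pow2_pos n; rewrite /bitval; case: (w n) => ?; field; lra.
Qed.

Lemma pval_incr w n : (pval w n <= pval w n.+1)%R.
Proof.
rewrite pvalS; have [? _] := bitval_bounds (w n).
have : (0 <= bitval (w n) / 2 ^ n.+1)%R.
  by apply: Rmult_le_pos => //; apply/Rlt_le/inv_pow2_pos.
lra.
Qed.

Lemma pval_le w n m : (n <= m)%N -> (pval w n <= pval w m)%R.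
Proof.
move=> /subnKC <-; elim: (m - n)%N => [|d IH]; first by rewrite addn0; lra.
by rewrite addnS; have := pval_incr w (n + d); lra.
Qed.

Lemma pval_tail w n m : (n <= m)%N -> (pval w m <= pval w n + / 2 ^ n - / 2 ^ m)%R.
Proof.
move=> /subnKC <-; elim: (m - n)%N => [|d IH]; first by rewrite addn0; lra.
rewrite addnS pvalS; move: IH; set p := (n + d)%N => IH.
have [_ ?] := bitval_bounds (w p); have := pow2_pos p; move=> ?.
have E : (/ 2 ^ p - / 2 ^ p.+1 = 1 / 2 ^ p.+1)%R by rewrite /=; field; lra.
have : (bitval (w p) / 2 ^ p.+1 <= 1 / 2 ^ p.+1)%R.
  by apply: Rmult_le_compat_r => //; apply/Rlt_le/inv_pow2_pos.
lra.
Qed.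

Lemma pval_le1 w m : (pval w m <= 1)%R.
Proof. have := pval_tail w 0 m (leq0n m); have := inv_pow2_pos m; rewrite pval0 /=; lra. Qed.

Lemma incr_le_lim (u : nat -> R) (l : R) N : (forall n, u n <= u n.+1)%R ->
  is_lim_seq u l -> (u N <= l)%R.
Proof.
move=> Hu Hl.
have Hle : forall n, (u N <= u (n + N)%coq_nat)%R.
  by elim=> [|n IH] /=; [lra | have := Hu (n + N)%coq_nat; lra].
exact: is_lim_seq_le _ _ _ _ Hle (is_lim_seq_const _) (proj1 (is_lim_seq_incr_n u N l) Hl).
Qed.

Lemma lim_le_bound (u : nat -> R) (l c : R) : (forall n, u n <= c)%R ->
  is_lim_seq u l -> (l <= c)%R.
Proof. by move=> Hc Hl; apply: is_lim_seq_le u (fun _ => c) l c Hc Hl (is_lim_seq_const _). Qed.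

Lemma is_lim_seq_real u : ex_finite_lim_seq u -> is_lim_seq u (real (Lim_seq u)).
Proof. by move=> [l Hl]; rewrite (is_lim_seq_unique _ _ Hl). Qed.

Lemma pval_eq_upto w1 w2 n : (forall i, (i < n)%N -> w1 i = w2 i) ->
  forall m, (m <= n)%N -> pval w1 m = pval w2 m.
Proof.
move=> H; elim=> [|m IH] Hm; first by rewrite !pval0.
by rewrite !pvalS IH ?H // ltnW.
Qed.

(* Uniqueness of the expansion not ending in 0^oo: at the first difference
   between two expansions of x, the one with digit 0 has value at most
   P + 2^-(n+1), while the one with digit 1 followed by a later 1 exceeds it. *)
Lemma expansion_first_difference x w1 w2 n :
  (forall i, (i < n)%N -> w1 i = w2 i) -> w1 n = false -> w2 n = true ->
  is_expansion x w1 -> is_expansion x w2 -> not_ending_in_zeros w2 -> False.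
Proof.
move=> Heq H1 H2 E1 E2 N2.
set P := pval w1 n.
have HP2 : pval w2 n = P by rewrite /P (pval_eq_upto w1 w2 n Heq n (leqnn n)).
have := inv_pow2_pos n.+1; move=> Hn.
have x_le : (x <= P + / 2 ^ n.+1)%R.
{ apply: (lim_le_bound (pval w1)) E1 => m.
  have V1 : pval w1 n.+1 = P by rewrite pvalS H1 /= /P; lra.
  case: (leqP m n.+1) => Hm; first by have := pval_le w1 _ _ Hm; lra.
  by have := pval_tail w1 _ _ (ltnW Hm); have := inv_pow2_pos m; lra. }
have [j [Hj Hwj]] := N2 n.+1.
have x_ge := incr_le_lim _ _ j.+1 (pval_incr w2) E2.
have : (P + / 2 ^ n.+1 + / 2 ^ j.+1 <= pval w2 j.+1)%R.
  by rewrite pvalS Hwj /=; have := pval_le w2 _ _ Hj; rewrite pvalS H2 HP2 /=; lra.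
by have := inv_pow2_pos j.+1; lra.
Qed.

Lemma expansion_unique x w1 w2 : is_expansion x w1 -> is_expansion x w2 ->
  not_ending_in_zeros w1 -> not_ending_in_zeros w2 -> w1 = w2.
Proof.
move=> E1 E2 N1 N2; apply: functional_extensionality => n0; apply: NNPP => Hne.
have [n Hn Hmin] : exists2 n, w1 n != w2 n & forall i, w1 i != w2 i -> (n <= i)%N.
  by case: (ex_minnP (ex_intro (fun n => w1 n != w2 n) n0 (introN eqP Hne))) => n; exists n.
have Heq : forall i, (i < n)%N -> w1 i = w2 i.
  by move=> i Hi; apply/eqP; apply: contraLR Hi => /Hmin; rewrite -leqNgt.
move: Hn; case E: (w1 n); case F: (w2 n) => // _.
- by apply: (expansion_first_difference x w2 w1 n _ F E E2 E1 N1) => i /Heq.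
- exact: (expansion_first_difference x w1 w2 n Heq E F E1 E2 N2).
Qed.

Lemma tilde_of_expansion x w : is_expansion x w -> not_ending_in_zeros w -> tilde x = w.
Proof.
move=> E N; rewrite /tilde.
have [E' N'] := epsilon_spec (inhabits (fun _ : nat => false))
  (fun w0 => is_expansion x w0 /\ not_ending_in_zeros w0) (ex_intro _ w (conj E N)).
exact: expansion_unique x _ _ E' E N' N.
Qed.

Definition word_value (W : iword) : R := real (Lim_seq (pval W)).

Lemma word_value_expansion W : is_expansion (word_value W) W.
Proof.
apply: is_lim_seq_real; apply: (ex_finite_lim_seq_incr _ 1) => n.
- exact: pval_incr.
- exact: pval_le1.
Qed.

Lemma word_value_range W : not_ending_in_zeros W -> (0 < word_value W <= 1)%R.
Proof.
move=> NW; have E := word_value_expansion W.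
split; last exact: lim_le_bound (pval W) _ _ (pval_le1 W) E.
have [j [_ Hj]] := NW 0%N.
have := incr_le_lim (pval W) _ j.+1 (pval_incr W) E.
rewrite pvalS Hj /bitval; have := pval_le W 0 j (leq0n j); have := inv_pow2_pos j.+1.
rewrite pval0; lra.
Qed.

Lemma tilde_word_value W : not_ending_in_zeros W -> tilde (word_value W) = W.
Proof. exact/tilde_of_expansion/word_value_expansion. Qed.

Lemma f_sigma_word_value k (sigma : k.-tuple bool -> seq bool) weps W :
  not_ending_in_zeros W -> ~ is_block_power weps W ->
  f_sigma sigma weps (word_value W) = subst_val sigma W.
Proof.
move=> NW NP; rewrite /f_sigma tilde_word_value //.
by case: excluded_middle_informative => // -[]; split; [exact: word_value_range|].
Qed.

Lemma f_sigma_cases k (sigma : k.-tuple bool -> seq bool) weps y :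
  f_sigma sigma weps y = 0%R \/ f_sigma sigma weps y = subst_val sigma (tilde y).
Proof. by rewrite /f_sigma; case: excluded_middle_informative; [right|left]. Qed.

Lemma not_ending_in_zeros_blocks k (W : iword) : (0 < k)%N ->
  (forall N, exists j, (N <= j)%N /\ exists r : 'I_k, tnth (block k W j) r) ->
  not_ending_in_zeros W.
Proof.
move=> hk HW N; have [j [Hj [r Hr]]] := HW N.
exists (k * j + r)%N; split; last by move: Hr; rewrite tnth_mktuple.
by apply: leq_trans Hj _; apply: leq_trans (leq_addr _ _); rewrite leq_pmull.
Qed.

Lemma distinct_blocks_have_one k (b1 b2 : k.-tuple bool) :
  b1 <> b2 -> exists r : 'I_k, tnth b1 r || tnth b2 r.
Proof.
move=> Hne; apply: NNPP => Hno; apply: Hne; apply: eq_from_tnth => r.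
case E1: (tnth b1 r); case E2: (tnth b2 r) => //; case: Hno; exists r;
by rewrite ?E1 ?E2.
Qed.

Section Substitution.
Variables (k : nat) (sigma : k.-tuple bool -> seq bool) (weps : k.-tuple bool).
Hypothesis sigma_weps : sigma weps = [::].

Lemma subst_prefixS w n :
  subst_prefix sigma w n.+1 = subst_prefix sigma w n ++ sigma (block k w n).
Proof. by rewrite /subst_prefix -addn1 iotaD map_cat flatten_cat /= cats0. Qed.

Lemma subst_prefix_incr w n :
  (fval (subst_prefix sigma w n) <= fval (subst_prefix sigma w n.+1))%R.
Proof.
rewrite subst_prefixS fval_cat; have [? _] := fval_bounds (sigma (block k w n)).
have : (0 <= fval (sigma (block k w n)) / 2 ^ size (subst_prefix sigma w n))%R.
  by apply: Rmult_le_pos => //; apply/Rlt_le/inv_pow2_pos.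
lra.
Qed.

Lemma subst_val_double w w' :
  (forall n, subst_prefix sigma w' (2 * n) = subst_prefix sigma w n) ->
  subst_val sigma w' = subst_val sigma w.
Proof.
move=> H; rewrite /subst_val -(Lim_seq_subseq _ (fun n => 2 * n)%N).
- by congr real; apply: Lim_seq_ext => n; rewrite H.
- move=> P [N HN]; exists N => n /leP Hn; apply: HN; apply/leP.
  by apply: leq_trans Hn _; rewrite mul2n -addnn leq_addr.
- by apply: ex_lim_seq_incr => n; apply: subst_prefix_incr.
Qed.

Lemma subst_val_eventually_erased w :
  (exists N, forall n, (N <= n)%N -> block k w n = weps) -> dyadic0 (subst_val sigma w).
Proof.
move=> [N HN].
have E n : subst_prefix sigma w (n + N) = subst_prefix sigma w N.
  by elim: n => [|n IH] //; rewrite addSn subst_prefixS IH HN ?sigma_weps ?cats0 ?leq_addl.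
suff -> : subst_val sigma w = fval (subst_prefix sigma w N) by apply: dyadic0_fval.
rewrite /subst_val -(Lim_seq_incr_n _ N) (Lim_seq_ext _ (fun _ => fval (subst_prefix sigma w N))).
- by rewrite Lim_seq_const.
- by move=> n; rewrite /= -[(n + N)%coq_nat]/(n + N)%N E.
Qed.

Lemma infinitely_many_nonerased w : ~ dyadic0 (subst_val sigma w) ->
  forall N, exists i, (N <= i)%N /\ block k w i <> weps.
Proof.
move=> Hw N; apply: NNPP => H; apply/Hw/subst_val_eventually_erased.
by exists N => n Hn; apply: NNPP => Hb; apply: H; exists n.
Qed.

End Substitution.

(* The interleaving construction: the block pair (2j, 2j+1) of [interleave t]
   is (b_j, w_eps) when t j is false and (w_eps, b_j) when t j is true,
   where b_j is the j-th block of w. *)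
Section Interleave.
Variables (k : nat) (weps : k.-tuple bool) (w : iword).
Hypothesis k_gt0 : (0 < k)%N.

Section Selector.
Variable t : nat -> bool.

Definition pair_block (j : nat) : k.-tuple bool :=
  if odd j == t j./2 then block k w j./2 else weps.

Definition interleave (p : nat) : bool := nth false (pair_block (p %/ k)) (p %% k).

Lemma block_interleave j : block k interleave j = pair_block j.
Proof.
apply: eq_from_tnth => i; rewrite tnth_mktuple (tnth_nth false) /interleave.
rewrite mulnC divnMDl // divn_small ?ltn_ord // addn0.
by rewrite modnMDl modn_small ?ltn_ord.
Qed.

Lemma block_interleave_even n :
  block k interleave (2 * n) = if t n then weps else block k w n.
Proof. by rewrite block_interleave /pair_block mul2n odd_double doubleK; case: (t n). Qed.

Lemma block_interleave_odd n :
  block k interleave (2 * n).+1 = if t n then block k w n else weps.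
Proof.
rewrite block_interleave /pair_block mul2n -[n.*2.+1./2]/(uphalf n.*2) uphalf_double.
by rewrite /= odd_double; case: (t n).
Qed.

Lemma interleave_pair n :
  (block k interleave (2 * n) = block k w n /\ block k interleave (2 * n).+1 = weps) \/
  (block k interleave (2 * n) = weps /\ block k interleave (2 * n).+1 = block k w n).
Proof. by rewrite block_interleave_even block_interleave_odd; case: (t n); [right|left]. Qed.

Lemma subst_prefix_interleave (sigma : k.-tuple bool -> seq bool) :
  sigma weps = [::] -> forall n,
  subst_prefix sigma interleave (2 * n) = subst_prefix sigma w n.
Proof.
move=> sigma_weps; elim=> [|n IH] //.
rewrite mulnS add2n !subst_prefixS IH block_interleave_even block_interleave_odd -catA.
by case: (t n); rewrite sigma_weps ?cats0.
Qed.

Hypothesis w_nonerased : forall N, exists i, (N <= i)%N /\ block k w i <> weps.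

Lemma interleave_not_ending_in_zeros : not_ending_in_zeros interleave.
Proof.
apply: (not_ending_in_zeros_blocks k) => // N.
have [i [Hi Hb]] := w_nonerased N.
have [r /orP Hr] := distinct_blocks_have_one k _ _ Hb.
have L1 : (N <= 2 * i)%N by lia.
have L2 : (N <= (2 * i).+1)%N by lia.
case: (interleave_pair i) => -[E1 E2]; case: Hr => Hr.
- by exists (2 * i)%N; split => //; exists r; rewrite E1.
- by exists (2 * i).+1; split => //; exists r; rewrite E2.
- by exists (2 * i).+1; split => //; exists r; rewrite E2.
- by exists (2 * i)%N; split => //; exists r; rewrite E1.
Qed.

Lemma interleave_not_block_power : ~ is_block_power weps interleave.
Proof.
have [i [_ Hb]] := w_nonerased 0%N.
by move=> HP; case: (interleave_pair i) => -[E1 E2]; apply: Hb;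
  [rewrite -E1 | rewrite -E2]; apply: HP.
Qed.

End Selector.

Lemma interleave_selector t1 t2 n : interleave t1 = interleave t2 ->
  block k w n <> weps -> t1 n = t2 n.
Proof.
move=> E Hb; have := block_interleave_even t1 n; rewrite E block_interleave_even.
by case: (t1 n); case: (t2 n) => // H; case: Hb.
Qed.

End Interleave.

Definition selector (e : nat -> nat) (S : nat -> bool) (j : nat) : bool :=
  if excluded_middle_informative (exists n, e n = j /\ S n = true) then true else false.

Lemma selector_at e S : injective e -> forall n, selector e S (e n) = S n.
Proof.
move=> einj n; rewrite /selector; case: excluded_middle_informative => [[m [Hm HS]]|Hn] /=.
- by rewrite -(einj _ _ Hm) HS.
- by case E: (S n) => //; case: Hn; exists n.
Qed.

Lemma infinite_enum (P : nat -> Prop) : (forall N, exists n, (N <= n)%N /\ P n) ->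
  exists e : nat -> nat, injective e /\ forall n, P (e n).
Proof.
move=> HP; pose next N := proj1_sig (constructive_indefinite_description _ (HP N)).
have Hnext N : (N <= next N)%N /\ P (next N).
  by rewrite /next; case: constructive_indefinite_description.
pose e := fix e n := if n is m.+1 then next (e m).+1 else next 0%N.
have e_incr m n : (m < n)%N -> (e m < e n)%N.
{ elim: n => [|n IH] //; rewrite ltnS leq_eqVlt => /orP [/eqP ->|/IH].
  - exact: (proj1 (Hnext _)).
  - by have := proj1 (Hnext (e n).+1); rewrite /=; lia. }
exists e; split; last by case=> [|n]; apply: (proj2 (Hnext _)).
by move=> m n E; case: (ltngtP m n) => // /e_incr; rewrite E ltnn.
Qed.

Lemma cantor (G : (nat -> bool) -> nat) : ~ injective G.
Proof.
move=> Ginj.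
pose pick n := epsilon (inhabits (fun _ : nat => false)) (fun S => G S = n).
pose d m := ~~ pick m m.
have Hp : G (pick (G d)) = G d.
  exact: (epsilon_spec _ (fun S => G S = G d) (ex_intro _ d erefl)).
have := f_equal (fun S => S (G d)) (Ginj _ _ Hp); rewrite /d /=.
by case: (pick (G d) (G d)).
Qed.

Lemma uncountable_of_injection (P : R -> Prop) (F : (nat -> bool) -> R) :
  (forall S, P (F S)) -> injective F -> uncountable P.
Proof.
move=> PF Finj [g Hg]; apply: (@cantor (fun S => g (F S))) => S T E.
exact/Finj/Hg.
Qed.

Theorem lemma3p3 (k : nat) (hk : (2 <= k)%N)
  (sigma : k.-tuple bool -> seq bool) (weps : k.-tuple bool)
  (Hsigma : erasing_subst sigma weps)
  (Hweps : weps <> [tuple true | _ < k])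
  (x : R)
  (Hx_img : exists y, (0 <= y <= 1)%R /\ f_sigma sigma weps y = x)
  (Hx_dy : ~ dyadic0 x) :
  uncountable (fun y => (0 <= y <= 1)%R /\ f_sigma sigma weps y = x).
Proof.
have k_gt0 : (0 < k)%N by apply: ltnW.
have [sigma_weps _] := Hsigma.
have [y0 [_ Hy0]] := Hx_img.
(* x is not 0, so it is the substituted value of w := tilde y0 *)
have [Hx0|Hx] := f_sigma_cases k sigma weps y0;
  first by case: Hx_dy; rewrite -Hy0 Hx0; apply: dyadic0_0.
rewrite Hy0 in Hx; set w := tilde y0 in Hx.
have w_nonerased : forall N, exists i, (N <= i)%N /\ block k w i <> weps.
  by apply: (infinitely_many_nonerased _ _ _ sigma_weps); rewrite -Hx.
have [e [einj e_nonerased]] := infinite_enum _ w_nonerased.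
pose W S := interleave k weps w (selector e S).
have NW S : not_ending_in_zeros (W S).
  exact: interleave_not_ending_in_zeros k_gt0 _ w_nonerased.
apply: (uncountable_of_injection _ (fun S => word_value (W S))) => [S|S T E].
- split; first by have := word_value_range _ (NW S); lra.
  rewrite f_sigma_word_value // ?Hx; last exact: interleave_not_block_power.
  by apply/subst_val_double/subst_prefix_interleave.
- have EW : W S = W T by rewrite -(tilde_word_value _ (NW S)) E tilde_word_value.
  apply: functional_extensionality => n.
  rewrite -(selector_at e S einj) -(selector_at e T einj).
  exact: interleave_selector k_gt0 _ _ _ EW (e_nonerased n).
Qed.
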